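(* For every integer $q \ge 2$, the complete bipartite graph $K_{q-1,(q-1)^{q-1}}$ (viewed as an undirected graph) is $q$-solvable.
   Context: All graphs are finite. A directed graph $D=(V,E)$ has arcs $E \subseteq \{(u,v)\in V^2 : u \neq v\}$; bidirectional pairs are allowed. An undirected graph is identified with the directed graph having both arcs $(u,v)$ and $(v,u)$ for each edge $\{u,v\}$. The in-neighbourhood of $v$ is $N^-(v)=\{u : (u,v)\in E\}$. For an integer $q\ge 2$ let $[q]=\{0,1,\dots,q-1\}$, with arithmetic modulo $q$ where needed. A $D$-function over $[q]$ is a map $f=(f_v)_{v\in V}:[q]^V\to[q]^V$ such that each $f_v(x)$ depends only on $(x_u)_{u\in N^-(v)}$. The graph $D$ is $q$-solvable if there is a $D$-function $f$ over $[q]$ such that for every $x\in[q]^V$ there exists a vertex $v$ with $f_v(x)=x_v$. *)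

From mathcomp Require Import all_boot.
Set Implicit Arguments. Unset Strict Implicit. Unset Printing Implicit Defensive.

(* A directed graph on a finite vertex type V is given by its arc relation
   E : rel V, where E u v means (u,v) is an arc; loops are forbidden. *)
Definition digraph (V : finType) (E : rel V) : Prop := irreflexive E.

(* [q] = {0,...,q-1} is represented by 'I_q; a configuration x in [q]^V is
   a function V -> 'I_q.  A D-function is given coordinatewise: f v x is
   f_v(x), and it must depend only on the values of x on N^-(v). *)
Definition D_function (q : nat) (V : finType) (E : rel V)
  (f : V -> (V -> 'I_q) -> 'I_q) : Prop :=
  forall (v : V) (x y : V -> 'I_q),
    (forall u : V, E u v -> x u = y u) -> f v x = f v y.

Definition solvable (q : nat) (V : finType) (E : rel V) : Prop :=
  exists f : V -> (V -> 'I_q) -> 'I_q,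
    D_function E f /\ forall x : V -> 'I_q, exists v : V, f v x = x v.

(* Complete bipartite graph K_{a,b} on vertex set 'I_a + 'I_b, viewed as a
   directed graph with both arcs for each edge. *)

Definition Kbip_rel (a b : nat) : rel ('I_a + 'I_b)%type :=
  fun u v => match u, v with
             | inl _, inr _ => true
             | inr _, inl _ => true
             | _, _ => false
             end.
Arguments Kbip_rel : clear implicits.
Lemma Kbip_digraph a b : digraph (Kbip_rel a b).
Proof. by case. Qed.

From mathcomp Require Import all_boot.
From Stdlib Require Import Classical ClassicalEpsilon.
Set Implicit Arguments. Unset Strict Implicit. Unset Printing Implicit Defensive.

(* Write q = n+1 and read a value in [q] as an
   element of option [n], the extra value q-1 playing the role of None.  The
   right vertices are indexed by the functions phi : [n] -> [n]; right vertex
   phi guesses the position of the first left vertex a with x_a = phi(a) (and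
   q-1 = n if there is none).  The left vertices see the right values C and
   jointly guess a word h_C; it suffices that whenever the left word y differs
   from h_C everywhere, some right vertex phi guesses C(phi) correctly. *)

Definition upd (I : eqType) (U : Type) (f : I -> U) (a : I) (u : U) : I -> U :=
  fun b => if b == a then u else f b.

Lemma upd_notin (I : eqType) (U : Type) (s : seq I) (f : I -> U) a u :
  a \notin s -> {in s, upd f a u =1 f}.
Proof.
move=> a_notin_s b b_in_s; rewrite /upd.
by case: eqP b_in_s => // ->; rewrite (negbTE a_notin_s).
Qed.

Section FirstHit.
Variables I T : eqType.

Definition first_hit (s : seq I) (phi : I -> T) (y : I -> option T) : nat :=
  find (fun a => y a == Some (phi a)) s.

Lemma eq_in_first_hit s phi phi' y :
  {in s, phi =1 phi'} -> first_hit s phi y = first_hit s phi' y.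
Proof. by move=> eq_phi; apply: eq_in_find => a /eq_phi ->. Qed.

(* At the head position a, either every value
   t is the head of some phi with prescribed hit 0 (then h a := None works,
   since y a = Some t for some t), or some t0 is the head of no such phi (then
   h a := Some t0 forbids a hit at a, and we recurse on the phi with head t0,
   whose prescriptions are all positive). *)
Lemma prescribed_first_hits (s : seq I) (phi0 : I -> T)
    (c : (I -> T) -> nat) :
  uniq s -> (forall phi, c phi <= size s) ->
  exists h : I -> option T, forall y : I -> option T,
    {in s, forall a, y a != h a} -> exists phi, first_hit s phi y = c phi.
Proof.
elim: s c => [|a s IHs] c /=.
  move=> _ c_le0; exists (fun=> None) => y _; exists phi0.
  by apply/esym/eqP; rewrite -leqn0 c_le0.
move=> /andP[a_notin_s uniq_s] c_le.
case: (classic (forall t : T, exists phi, phi a = t /\ c phi = 0)) => [hit0|].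
  exists (fun=> None) => y y_avoids.
  have /= := y_avoids a (mem_head a s); case Eya: (y a) => [t|] // _.
  have [phi [<- c0]] := hit0 t.
  by exists phi; rewrite eqxx c0.
move=> /not_all_ex_not[t0 no_hit0].
have c_pos phi : 0 < c (upd phi a t0).
  rewrite lt0n; apply/eqP => c0; apply: no_hit0.
  by exists (upd phi a t0); rewrite /upd eqxx.
pose c' phi := (c (upd phi a t0)).-1.
have c'_le phi : c' phi <= size s by rewrite /c' -ltnS prednK.
have [h' h'P] := IHs c' uniq_s c'_le.
exists (upd h' a (Some t0)) => y y_avoids.
have [phi hit_phi] : exists phi, first_hit s phi y = c' phi.
  apply: h'P => b b_in_s; rewrite -(upd_notin h' (Some t0) a_notin_s) //.
  by rewrite y_avoids // inE b_in_s orbT.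
have y_a : y a != Some t0 by have := y_avoids a (mem_head a s); rewrite /upd eqxx.
exists (upd phi a t0); rewrite /first_hit /= {1}/upd eqxx (negbTE y_a).
rewrite -/(first_hit s _ y) (eq_in_first_hit y (upd_notin phi t0 a_notin_s)) hit_phi.
by rewrite prednK.
Qed.

End FirstHit.

Section CompleteBipartite.
Variable n : nat.

(* The n^n right vertices are identified with the functions [n] -> [n]. *)
Lemma card_funs : #|{: {ffun 'I_n -> 'I_n}}| = n ^ n.
Proof. by rewrite card_ffun !card_ord. Qed.

Definition fun_of_index (i : 'I_(n ^ n)) : {ffun 'I_n -> 'I_n} :=
  enum_val (cast_ord (esym card_funs) i).
Definition index_of_fun (f : {ffun 'I_n -> 'I_n}) : 'I_(n ^ n) :=
  cast_ord card_funs (enum_rank f).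

Lemma index_of_funK : cancel index_of_fun fun_of_index.
Proof. by move=> f; rewrite /fun_of_index /index_of_fun cast_ordK enum_rankK. Qed.

(* Values in [n+1] read as option [n]; n itself stands for None. *)
Definition decode (k : 'I_n.+1) : option 'I_n := insub (val k).
Definition encode (o : option 'I_n) : 'I_n.+1 :=
  oapp (widen_ord (leqnSn n)) ord_max o.

Lemma decodeK : cancel decode encode.
Proof.
move=> k; rewrite /decode; case: insubP => [u _ val_u|k_ge_n]; apply: val_inj => //=.
rewrite /= in k_ge_n.
by apply/eqP; rewrite eqn_leq leqNgt k_ge_n -ltnS ltn_ord.
Qed.

Let Vtx := ('I_n + 'I_(n ^ n))%type.

Definition left_word (x : Vtx -> 'I_n.+1) : 'I_n -> option 'I_n :=
  fun a => decode (x (inl a)).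
Definition right_values (x : Vtx -> 'I_n.+1) : {ffun 'I_(n ^ n) -> 'I_n.+1} :=
  [ffun i => x (inr i)].

Lemma left_guess_for (C : {ffun 'I_(n ^ n) -> 'I_n.+1}) :
  exists h : 'I_n -> option 'I_n, forall y, (forall a, y a != h a) ->
    exists i, first_hit (enum 'I_n) (fun_of_index i) y = C i.
Proof.
pose c (phi : 'I_n -> 'I_n) := val (C (index_of_fun [ffun a => phi a])).
have c_le phi : c phi <= size (enum 'I_n).
  by rewrite size_enum_ord -ltnS; apply: ltn_ord.
have [h hP] := prescribed_first_hits id (enum_uniq 'I_n) c_le.
exists h => y y_avoids; have [phi hit_phi] := hP y (fun a _ => y_avoids a).
exists (index_of_fun [ffun a => phi a]).
rewrite index_of_funK -[RHS]/(c phi) -hit_phi.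
by apply: eq_in_first_hit => a _; rewrite ffunE.
Qed.

(* If the left word
   meets h_C somewhere, that left vertex is right; otherwise some right vertex
   is, by the choice of h_C. *)
Lemma complete_bipartite_solvable : solvable n.+1 (Kbip_rel n (n ^ n)).
Proof.
have [H HP] := @ClassicalEpsilon.choice _ _ _ left_guess_for.
pose f (v : Vtx) (x : Vtx -> 'I_n.+1) : 'I_n.+1 :=
  match v with
  | inl a => encode (H (right_values x) a)
  | inr i => inord (first_hit (enum 'I_n) (fun_of_index i) (left_word x))
  end.
exists f; split.
  move=> [a|i] x y eq_xy /=; congr (_ _).
    by congr (H _ _); apply/ffunP => i; rewrite !ffunE eq_xy.
  by apply: eq_find => a; rewrite /left_word eq_xy.
move=> x.
case: (pickP (fun a => left_word x a == H (right_values x) a)) => [a /eqP Ea|].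
  by exists (inl a); rewrite /= -Ea decodeK.
move=> no_left_hit.
have [i Ei] := HP (right_values x) (left_word x) (fun a => negbT (no_left_hit a)).
by exists (inr i); rewrite /= Ei ffunE inord_val.
Qed.

End CompleteBipartite.

Theorem theorem1 (q : nat) (hq : 2 <= q) :
  solvable q (Kbip_rel (q - 1) ((q - 1) ^ (q - 1))).
Proof.
case: q hq => [|n] // _.
rewrite subn1 /=.
exact: complete_bipartite_solvable.
Qed.
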